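(* For every $r>0$, every $\theta,\varphi\in[0,2\pi]$ and every positive integer $L$, $$\frac{12}{L}\sum_{j=0}^{L-1}\big|1-re^{i(j\theta+\varphi)}\big|^2\ \ge\ \big|1-re^{i\varphi}\big|^2.$$ *)

From Stdlib Require Import Reals.
Open Scope R_scope.

Definition Cx : Type := (R * R)%type.

Definition Csub (z w : Cx) : Cx := (fst z - fst w, snd z - snd w).
Definition Cscale (r : R) (z : Cx) : Cx := (r * fst z, r * snd z).
Definition Cone : Cx := (1, 0).
Definition Cexpi (t : R) : Cx := (cos t, sin t).
Definition Cnorm2 (z : Cx) : R := fst z ^ 2 + snd z ^ 2.

Fixpoint sum_lt (L : nat) (f : nat -> R) : R :=
  match L with
  | O => 0
  | S n => sum_lt n f + f n
  end.

(* Since |1 - r e^{ix}|^2 = (1 - r)^2 + 4 r sin^2 (x/2), and the constant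
   part (1 - r)^2 only gains from the factor 12, everything reduces to the
   averaging inequality  L * sin^2 (phi/2) <= 12 * sum_{j<L} g j  with
   g j = sin^2 (a_j),  a_j = (j theta + phi)/2.
   Its proof uses only the identity  phi/2 = a_j + a_(n-j) - a_n  (j <= n)
   together with  sin^2 (a + b - c) <= 3 (sin^2 a + sin^2 b + sin^2 c):
   summing the resulting bound over j <= n and then over n < L yields
     L (L + 1)/6 * sin^2 (phi/2) <= sum_{n<L} (2 G_(n+1) + (n+1) g n)
                                 <= (2L + 1) G_L,
   where G_k = sum_{j<k} g j; dividing by L + 1 gives the factor 12. *)

From Stdlib Require Import Reals Lra Lia Psatz.
Open Scope R_scope.

Lemma sum_lt_ext n f g :
  (forall j, (j < n)%nat -> f j = g j) -> sum_lt n f = sum_lt n g.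
Proof.
  induction n as [|n IH]; intros Hfg; simpl; [reflexivity|].
  rewrite IH by (intros; apply Hfg; lia).
  rewrite (Hfg n) by lia; reflexivity.
Qed.

Lemma sum_lt_le n f g :
  (forall j, (j < n)%nat -> f j <= g j) -> sum_lt n f <= sum_lt n g.
Proof.
  induction n as [|n IH]; intros Hfg; simpl; [lra|].
  assert (sum_lt n f <= sum_lt n g) by (apply IH; intros; apply Hfg; lia).
  assert (f n <= g n) by (apply Hfg; lia).
  lra.
Qed.

Lemma sum_lt_plus n f g :
  sum_lt n (fun j => f j + g j) = sum_lt n f + sum_lt n g.
Proof. induction n as [|n IH]; simpl; [lra|]. rewrite IH; lra. Qed.

Lemma sum_lt_scal n c f : sum_lt n (fun j => c * f j) = c * sum_lt n f.
Proof. induction n as [|n IH]; simpl; [lra|]. rewrite IH; lra. Qed.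

Lemma sum_lt_const n c : sum_lt n (fun _ => c) = INR n * c.
Proof.
  induction n as [|n IH]; simpl sum_lt; [simpl; lra|].
  rewrite IH, S_INR; lra.
Qed.

Lemma sum_lt_nonneg n f : (forall j, 0 <= f j) -> 0 <= sum_lt n f.
Proof.
  intros Hf; induction n as [|n IH]; simpl; [lra|].
  specialize (Hf n); lra.
Qed.

Lemma sum_lt_shift n f : sum_lt (S n) f = f 0%nat + sum_lt n (fun j => f (S j)).
Proof. induction n as [|n IH]; simpl in *; [lra|]. rewrite IH; lra. Qed.

Lemma sum_lt_rev n f : sum_lt (S n) (fun j => f (n - j)%nat) = sum_lt (S n) f.
Proof.
  revert f; induction n as [|n IH]; intros f; [simpl; lra|].
  change (sum_lt (S (S n)) (fun j => f (S n - j)%nat))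
    with (sum_lt (S n) (fun j => f (S n - j)%nat) + f (S n - S n)%nat).
  rewrite (sum_lt_ext (S n) _ (fun j => (fun i => f (S i)) (n - j)%nat))
    by (intros j Hj; f_equal; lia).
  rewrite (IH (fun i => f (S i))), (sum_lt_shift (S n) f), Nat.sub_diag.
  lra.
Qed.

Lemma chord_norm2 r x :
  Cnorm2 (Csub Cone (Cscale r (Cexpi x))) = (1 - r) ^ 2 + 4 * r * sin (x / 2) ^ 2.
Proof.
  unfold Cnorm2, Csub, Cone, Cscale, Cexpi; cbn [fst snd].
  assert (Hcos : cos x = 1 - 2 * sin (x / 2) ^ 2).
  { replace x with (2 * (x / 2)) at 1 by field. rewrite cos_2a_sin. ring. }
  assert (Hsin : sin x ^ 2 = 1 - cos x ^ 2).
  { pose proof (sin2_cos2 x) as Hpyth. unfold Rsqr in Hpyth. lra. }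
  replace ((0 - r * sin x) ^ 2) with (r ^ 2 * sin x ^ 2) by ring.
  rewrite Hsin, Hcos; ring.
Qed.

(* |sin| is subadditive, since |cos| <= 1. *)
Lemma Rabs_sin_add a b : Rabs (sin (a + b)) <= Rabs (sin a) + Rabs (sin b).
Proof.
  assert (Habs_mul : forall u v, Rabs v <= 1 -> Rabs (u * v) <= Rabs u).
  { intros u v Hv. rewrite Rabs_mult. pose proof (Rabs_pos u). nra. }
  assert (Hcos : forall t, Rabs (cos t) <= 1).
  { intros t. apply Rabs_le. pose proof (COS_bound t). lra. }
  rewrite sin_plus. eapply Rle_trans; [apply Rabs_triang|].
  pose proof (Habs_mul (sin a) (cos b) (Hcos b)).
  pose proof (Habs_mul (sin b) (cos a) (Hcos a)).
  rewrite (Rmult_comm (cos a)). lra.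
Qed.

(* The three-term bound used with a = a_j, b = a_(n-j), c = a_n. *)
Lemma sin_sq_add_sub a b c :
  sin (a + b - c) ^ 2 <= 3 * (sin a ^ 2 + sin b ^ 2 + sin c ^ 2).
Proof.
  assert (Hsub : Rabs (sin (a + b - c))
                 <= Rabs (sin a) + Rabs (sin b) + Rabs (sin c)).
  { unfold Rminus. eapply Rle_trans; [apply Rabs_sin_add|].
    rewrite sin_neg, Rabs_Ropp. pose proof (Rabs_sin_add a b). lra. }
  rewrite <- (pow2_abs (sin (a + b - c))), <- (pow2_abs (sin a)),
    <- (pow2_abs (sin b)), <- (pow2_abs (sin c)).
  set (x := Rabs (sin (a + b - c))) in *. set (p := Rabs (sin a)) in *.
  set (q := Rabs (sin b)) in *. set (w := Rabs (sin c)) in *.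
  assert (x ^ 2 <= (p + q + w) ^ 2)
    by (apply pow_incr; split; [apply Rabs_pos | exact Hsub]).
  pose proof (pow2_ge_0 (p - q)). pose proof (pow2_ge_0 (q - w)).
  pose proof (pow2_ge_0 (p - w)).
  nra.
Qed.

Section Averaging.
Variable g : nat -> R.
Variable s2 : R.
Hypothesis g_nonneg : forall j, 0 <= g j.
Hypothesis triangle : forall n j, (j <= n)%nat -> s2 <= 3 * (g j + g (n - j)%nat + g n).

(* Summing the triangle bound over j <= n; the terms g (n - j) are the
   terms g j in reverse order. *)
Lemma triangle_row n :
  INR (S n) * s2 <= 3 * (2 * sum_lt (S n) g + INR (S n) * g n).
Proof.
  rewrite <- sum_lt_const.
  eapply Rle_trans.
  { apply (sum_lt_le (S n) _ (fun j => 3 * (g j + g (n - j)%nat + g n))).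
    intros j Hj. apply triangle. lia. }
  rewrite sum_lt_scal, !sum_lt_plus, sum_lt_rev, !sum_lt_const. lra.
Qed.

Definition row_total (L : nat) : R :=
  sum_lt L (fun n => 2 * sum_lt (S n) g + INR (S n) * g n).

(* Each g j occurs in [row_total L] with weight 2L + 1 - j <= 2L + 1. *)
Lemma row_total_upper L : row_total L <= (2 * INR L + 1) * sum_lt L g.
Proof.
  induction L as [|L IH]; unfold row_total in *; [simpl; lra|].
  change (sum_lt (S L) ?F) with (sum_lt L F + F L); cbv beta.
  change (sum_lt (S L) g) with (sum_lt L g + g L).
  rewrite S_INR.
  pose proof (g_nonneg L). pose proof (pos_INR L).
  pose proof (sum_lt_nonneg L g g_nonneg).
  nra.
Qed.

Lemma row_total_lower L : INR L * (INR L + 1) / 6 * s2 <= row_total L.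
Proof.
  induction L as [|L IH]; unfold row_total in *; [simpl; lra|].
  change (sum_lt (S L) ?F) with (sum_lt L F + F L); cbv beta.
  pose proof (triangle_row L). rewrite S_INR in *. lra.
Qed.

Lemma averaging_bound L : INR L * s2 <= 12 * sum_lt L g.
Proof.
  pose proof (row_total_upper L). pose proof (row_total_lower L).
  pose proof (pos_INR L). pose proof (sum_lt_nonneg L g g_nonneg).
  apply Rmult_le_reg_r with (2 * INR L + 1); [lra|].
  nra.
Qed.
End Averaging.

(* The averaging bound for the half-angle sines implies the proposition:
   the constant part (1 - r)^2 is only enlarged by the factor 12. *)
Lemma mean_chord_bound (r s2 G : R) (L : nat) :
  0 < r -> (0 < L)%nat -> INR L * s2 <= 12 * G ->
  (12 / INR L) * (INR L * (1 - r) ^ 2 + 4 * r * G) >= (1 - r) ^ 2 + 4 * r * s2.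
Proof.
  intros Hr HL Havg.
  assert (HLpos : 0 < INR L) by (apply lt_0_INR; exact HL).
  assert (Hs2 : s2 <= 12 * G / INR L).
  { apply Rmult_le_reg_r with (INR L); [lra|].
    unfold Rdiv. rewrite Rmult_assoc, Rinv_l by lra. lra. }
  replace ((12 / INR L) * (INR L * (1 - r) ^ 2 + 4 * r * G))
    with (12 * (1 - r) ^ 2 + 4 * r * (12 * G / INR L)) by (field; lra).
  pose proof (pow2_ge_0 (1 - r)).
  nra.
Qed.

Theorem proposition6p1 :
  forall (r theta phi : R) (L : nat),
    0 < r ->
    0 <= theta <= 2 * PI ->
    0 <= phi <= 2 * PI ->
    (0 < L)%nat ->
    (12 / INR L) *
      sum_lt L (fun j => Cnorm2 (Csub Cone (Cscale r (Cexpi (INR j * theta + phi)))))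
    >= Cnorm2 (Csub Cone (Cscale r (Cexpi phi))).
Proof.
  intros r theta phi L Hr _ _ HL.
  set (g := fun j : nat => sin ((INR j * theta + phi) / 2) ^ 2).
  (* phi/2 = a_j + a_(n-j) - a_n for the half-angles a_k = (k theta + phi)/2. *)
  assert (Havg : INR L * sin (phi / 2) ^ 2 <= 12 * sum_lt L g).
  { apply averaging_bound; [intros j; apply pow2_ge_0|].
    intros n j Hj. unfold g.
    replace (phi / 2) with ((INR j * theta + phi) / 2 + (INR (n - j) * theta + phi) / 2
                            - (INR n * theta + phi) / 2)
      by (rewrite minus_INR by exact Hj; field).
    apply sin_sq_add_sub. }
  rewrite (sum_lt_ext L _ (fun j => (1 - r) ^ 2 + 4 * r * g j))
    by (intros j _; apply chord_norm2).
  rewrite sum_lt_plus, sum_lt_const, sum_lt_scal, chord_norm2.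
  exact (mean_chord_bound r _ _ L Hr HL Havg).
Qed.
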